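(* Let $u>0$ and suppose there is an open set $S\ni\theta_i$ with $\sup_{\theta\in S}E_\theta|X_{i,t}|^p<\infty$ for some $p>u$. Then for every $k\in\mathbb N_0$, $$\sup_{\theta\in S}m_\theta^{(k)}(u)=\sup_{\theta\in S}\frac1{\sqrt{2\pi}}\sum_{n=0}^\infty\exp\Big(-\frac{Q_n(\theta)^2}{2u}\Big)|Q_n(\theta)|^k<\infty.$$
   Context: $X_{i,t}$ is an $\mathbb N_0$-valued random variable with distribution depending on $\theta\in\mathbb R^{K_i}$, $C_n(\theta)=P_\theta[X_{i,t}\le n]$, $Q_n(\theta)=\Phi^{-1}(C_n(\theta))$ with $\Phi$ the standard normal CDF; summands with $Q_n(\theta)=\pm\infty$ are interpreted as $0$. *)

From Stdlib Require Fin.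
From Stdlib Require Import Reals Lra ClassicalEpsilon.
From Coquelicot Require Import Coquelicot.
Open Scope R_scope.

Definition param (K : nat) := Fin.t K -> R.

(* Open subset of R^K (sup-norm balls; equivalent to Euclidean topology). *)
Definition is_open_param {K : nat} (S : param K -> Prop) : Prop :=
  forall th, S th -> exists eps, 0 < eps /\
    forall th', (forall i, Rabs (th' i - th i) < eps) -> S th'.

Definition Phi (x : R) : R :=
  / sqrt (2 * PI) * RInt_gen (fun t => exp (- t ^ 2 / 2)) (Rbar_locally m_infty) (at_point x).

Definition Phi_inv (c : R) : R :=
  epsilon (inhabits 0) (fun x => Phi x = c).

Definition is_pmf_family {K : nat} (P : param K -> nat -> R) : Prop :=
  forall th, (forall n, 0 <= P th n) /\ is_series (P th) 1.

Definition Ccdf {K : nat} (P : param K -> nat -> R) (th : param K) (n : nat) : R :=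
  sum_f_R0 (P th) n.

(* Q_n(theta) = Phi^{-1}(C_n(theta)); meaningful (finite) iff 0 < C_n < 1 *)
Definition Qn {K : nat} (P : param K -> nat -> R) (th : param K) (n : nat) : R :=
  Phi_inv (Ccdf P th n).

(* Summand of m_theta^(k)(u); terms with Q_n = +-oo (C_n in {0,1}) are 0 *)
Definition m_term {K : nat} (P : param K -> nat -> R) (u : R) (k : nat)
    (th : param K) (n : nat) : R :=
  if Rlt_dec 0 (Ccdf P th n) then
    if Rlt_dec (Ccdf P th n) 1 then
      / sqrt (2 * PI) * (exp (- (Qn P th n) ^ 2 / (2 * u)) * Rabs (Qn P th n) ^ k)
    else 0
  else 0.

Definition rpow (x p : R) : R := if Req_EM_T x 0 then 0 else Rpower x p.

Definition moment_term {K : nat} (P : param K -> nat -> R) (p : R)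
    (th : param K) (n : nat) : R :=
  rpow (INR n) p * P th n.

(* By Markov's inequality and the uniform moment bound, [1 - C_n(theta) <= M (n+1)^(-p)].
   The Gaussian upper tail satisfies [1 - Phi x >= exp (-(x+1)^2/2) / sqrt (2 PI)] for [x >= 0]
   (and [1 - Phi x >= 1/2] for [x <= 0]), so for every [r] with [r u < 1] the weight
   [exp (-x^2/(2u)) |x|^k] is at most [A (1 - Phi x)^r]. At [x = Q_n(theta)] this bounds the
   [n]-th summand by [A M^r (n+1)^(-p r)]; choosing [1/p < r < 1/u] gives a summable bound that
   does not depend on [theta].
   [Phi] is handled through the primitive [gauss_int] of [exp (-t^2/2)]: by Feynman's trick
   [gauss_int x ^ 2 + 2 * feynman_int x] is constantly [PI / 2] while [feynman_int x] is
   squeezed between [0] and [exp (-x^2/2)], which yields the normalisation of [Phi], its tails,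
   and the existence of [Phi_inv] on [(0, 1)]. *)

From Stdlib Require Import Reals Lra Psatz Factorial FunctionalExtensionality ClassicalEpsilon.
From Coquelicot Require Import Coquelicot.
Open Scope R_scope.

Definition gauss (t : R) : R := exp (- t ^ 2 / 2).

Definition gauss_int (x : R) : R := RInt gauss 0 x.

Definition feynman_kernel (x s : R) : R := exp (- x ^ 2 * (1 + s ^ 2) / 2) / (1 + s ^ 2).

Definition feynman_int (x : R) : R := RInt (feynman_kernel x) 0 1.

Lemma one_plus_sqr_pos (s : R) : 0 < 1 + s ^ 2.
Proof. nra. Qed.

Lemma exp_le_compat (x y : R) : x <= y -> exp x <= exp y.
Proof. intros [Hlt|Heq]; [apply Rlt_le, exp_increasing, Hlt|rewrite Heq; apply Rle_refl]. Qed.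

Lemma RInt_const_mul (c a b : R) : RInt (fun _ => c) a b = (b - a) * c.
Proof. apply (RInt_const (V := R_CompleteNormedModule)). Qed.

Lemma gauss_pos (x : R) : 0 < gauss x.
Proof. apply exp_pos. Qed.

Lemma continuous_gauss (x : R) : continuous gauss x.
Proof. apply (ex_derive_continuous (V := R_NormedModule)). unfold gauss. auto_derive. auto. Qed.

Lemma ex_RInt_gauss (a b : R) : ex_RInt gauss a b.
Proof.
  apply (ex_RInt_continuous (V := R_CompleteNormedModule)). intros t _. apply continuous_gauss.
Qed.

Lemma is_derive_gauss_int (x : R) : is_derive gauss_int x (gauss x).
Proof.
  apply (is_derive_RInt gauss gauss_int 0 x).
  - apply filter_forall. intros y.
    apply (RInt_correct (V := R_CompleteNormedModule)), ex_RInt_gauss.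
  - apply continuous_gauss.
Qed.

Lemma is_derive_feynman_kernel (x s : R) :
  is_derive (fun y => feynman_kernel y s) x (- gauss x * (x * gauss (x * s))).
Proof.
  pose proof (one_plus_sqr_pos s).
  unfold feynman_kernel, gauss. auto_derive; [lra|].
  replace (- exp (- x ^ 2 / 2) * (x * exp (- (x * s) ^ 2 / 2)))
    with (- x * exp (- x ^ 2 / 2 + - (x * s) ^ 2 / 2)) by (rewrite exp_plus; ring).
  replace (- x ^ 2 / 2 + - (x * s) ^ 2 / 2) with (- (x * (x * 1)) * (1 + s * (s * 1)) * / 2)
    by (simpl; field).
  simpl. field. lra.
Qed.

Lemma continuity_2d_Derive_feynman_kernel (x s : R) :
  continuity_2d_pt (fun y t => Derive (fun z => feynman_kernel z t) y) x s.
Proof.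
  apply continuity_2d_pt_ext with (fun y t => - gauss y * (y * gauss (y * t))).
  { intros y t. symmetry. apply is_derive_unique, is_derive_feynman_kernel. }
  assert (Hg : forall z, continuity_pt gauss z).
  { intros z. apply continuity_pt_filterlim, continuous_gauss. }
  apply continuity_2d_pt_mult; [apply continuity_2d_pt_opp|apply continuity_2d_pt_mult].
  - apply continuity_1d_2d_pt_comp; [apply Hg|apply continuity_2d_pt_id1].
  - apply continuity_2d_pt_id1.
  - apply continuity_1d_2d_pt_comp; [apply Hg|].
    apply continuity_2d_pt_mult; [apply continuity_2d_pt_id1|apply continuity_2d_pt_id2].
Qed.

Lemma ex_RInt_feynman_kernel (x a b : R) : ex_RInt (feynman_kernel x) a b.
Proof.
  apply (ex_RInt_continuous (V := R_CompleteNormedModule)). intros s _.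
  apply (ex_derive_continuous (V := R_NormedModule)). unfold feynman_kernel.
  auto_derive. pose proof (one_plus_sqr_pos s). lra.
Qed.

Lemma is_derive_feynman_int (x : R) : is_derive feynman_int x (- gauss x * gauss_int x).
Proof.
  assert (Hint : RInt (fun s => - gauss x * (x * gauss (x * s))) 0 1 = - gauss x * gauss_int x).
  { rewrite (RInt_scal (V := R_CompleteNormedModule) (fun s => x * gauss (x * s))).
    - rewrite (RInt_ext _ (fun s => scal x (gauss (x * s + 0))))
        by (intros; rewrite Rplus_0_r; reflexivity).
      rewrite (RInt_comp_lin (V := R_CompleteNormedModule)) by apply ex_RInt_gauss.
      unfold gauss_int. rewrite Rmult_0_r, !Rmult_1_r, !Rplus_0_r. reflexivity.
    - apply (ex_RInt_continuous (V := R_CompleteNormedModule)). intros s _.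
      apply (ex_derive_continuous (V := R_NormedModule)). unfold gauss. auto_derive. auto. }
  rewrite <- Hint. unfold feynman_int.
  rewrite (RInt_ext _ (fun s => Derive (fun y => feynman_kernel y s) x))
    by (intros s _; symmetry; apply is_derive_unique, is_derive_feynman_kernel).
  apply is_derive_RInt_param.
  - apply filter_forall. intros y s _. eexists. apply is_derive_feynman_kernel.
  - intros s _. apply continuity_2d_Derive_feynman_kernel.
  - apply filter_forall. intros y. apply ex_RInt_feynman_kernel.
Qed.

Lemma gauss_int_0 : gauss_int 0 = 0.
Proof. apply (RInt_point (V := R_CompleteNormedModule)). Qed.

Lemma feynman_int_0 : feynman_int 0 = PI / 4.
Proof.
  replace (PI / 4) with (atan 1 - atan 0) by (rewrite atan_0, atan_1; ring).
  apply (is_RInt_unique (V := R_CompleteNormedModule)).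
  apply (is_RInt_ext (V := R_CompleteNormedModule) (fun s => / (1 + s ^ 2))).
  { intros s _. unfold feynman_kernel.
    replace (- 0 ^ 2 * (1 + s ^ 2) / 2) with 0 by field.
    rewrite exp_0. unfold Rdiv. rewrite Rmult_1_l. reflexivity. }
  apply (is_RInt_derive (V := R_CompleteNormedModule) atan).
  - intros s _. apply is_derive_Reals, derivable_pt_lim_atan.
  - intros s _. apply (ex_derive_continuous (V := R_NormedModule)). auto_derive.
    pose proof (one_plus_sqr_pos s). lra.
Qed.

Lemma gauss_int_sqr_add_feynman_int (x : R) : gauss_int x ^ 2 + 2 * feynman_int x = PI / 2.
Proof.
  set (h y := gauss_int y ^ 2 + 2 * feynman_int y).
  assert (Hh : forall y, is_derive h y 0).
  { intros y. replace 0 with (INR 2 * gauss y * (gauss_int y * 1) + 2 * (- gauss y * gauss_int y))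
      by (simpl; ring).
    apply (is_derive_plus (K := R_AbsRing) (V := R_NormedModule)).
    - apply is_derive_pow, is_derive_gauss_int.
    - apply is_derive_scal, is_derive_feynman_int. }
  change (h x = PI / 2).
  replace (PI / 2) with (h 0) by (unfold h; rewrite gauss_int_0, feynman_int_0; field).
  destruct (Rtotal_order x 0) as [Hx|[->|Hx]]; [|reflexivity|symmetry];
    apply (eq_is_derive (V := R_NormedModule)); auto.
Qed.

Lemma feynman_int_bounds (x : R) : 0 <= feynman_int x <= gauss x.
Proof.
  assert (Hk : forall s, 0 <= s <= 1 -> 0 <= feynman_kernel x s <= gauss x).
  { intros s _. pose proof (one_plus_sqr_pos s). unfold feynman_kernel, gauss.
    assert (Hexp : exp (- x ^ 2 * (1 + s ^ 2) / 2) <= exp (- x ^ 2 / 2)).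
    { apply exp_le_compat. pose proof (pow2_ge_0 x). pose proof (pow2_ge_0 s). nra. }
    split; [apply Rlt_le, Rdiv_lt_0_compat; [apply exp_pos|lra]|].
    apply Rle_trans with (2 := Hexp). unfold Rdiv.
    rewrite <- (Rmult_1_r (exp _)) at 2. apply Rmult_le_compat_l; [apply Rlt_le, exp_pos|].
    rewrite <- Rinv_1. apply Rinv_le_contravar; [lra|]. pose proof (pow2_ge_0 s). lra. }
  unfold feynman_int. split.
  - apply RInt_ge_0; [lra|apply ex_RInt_feynman_kernel|]. intros s Hs. apply Hk. lra.
  - apply Rle_trans with (RInt (fun _ => gauss x) 0 1); [|rewrite RInt_const_mul; lra].
    apply RInt_le; [lra|apply ex_RInt_feynman_kernel|apply ex_RInt_const|].
    intros s Hs. apply Hk. lra.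
Qed.

Definition gauss_half_mass : R := sqrt (PI / 2).

Lemma gauss_half_mass_pos : 0 < gauss_half_mass.
Proof. apply sqrt_lt_R0. pose proof PI_RGT_0. lra. Qed.

Lemma gauss_half_mass_sqr : gauss_half_mass ^ 2 = PI / 2.
Proof. simpl. rewrite Rmult_1_r. apply sqrt_sqrt. pose proof PI_RGT_0. lra. Qed.

Lemma gauss_int_sub (a b : R) : gauss_int b - gauss_int a = RInt gauss a b.
Proof.
  unfold gauss_int.
  rewrite <- (RInt_Chasles (V := R_CompleteNormedModule) gauss 0 a b) by apply ex_RInt_gauss.
  unfold plus. simpl. ring.
Qed.

Lemma gauss_int_le_le (a b : R) : a <= b -> gauss_int a <= gauss_int b.
Proof.
  intros Hab. cut (0 <= gauss_int b - gauss_int a); [lra|]. rewrite gauss_int_sub.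
  apply RInt_ge_0; [exact Hab|apply ex_RInt_gauss|]. intros t _. apply Rlt_le, gauss_pos.
Qed.

Lemma abs_gauss_int_sqr (x : R) :
  Rabs (gauss_int x) ^ 2 = gauss_half_mass ^ 2 - 2 * feynman_int x.
Proof.
  rewrite gauss_half_mass_sqr, <- (gauss_int_sqr_add_feynman_int x), <- !Rsqr_pow2, <- Rsqr_abs.
  ring.
Qed.

Lemma abs_gauss_int_le (x : R) : Rabs (gauss_int x) <= gauss_half_mass.
Proof.
  pose proof (abs_gauss_int_sqr x). pose proof (feynman_int_bounds x).
  pose proof gauss_half_mass_pos. pose proof (Rabs_pos (gauss_int x)). nra.
Qed.

(* The gap is [2 * feynman_int x / (gauss_half_mass + |gauss_int x|)]. *)
Lemma gauss_half_mass_sub_abs_gauss_int (x : R) :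
  gauss_half_mass - Rabs (gauss_int x) <= 2 * gauss x / gauss_half_mass.
Proof.
  pose proof (abs_gauss_int_sqr x). pose proof (feynman_int_bounds x).
  pose proof gauss_half_mass_pos. pose proof (Rabs_pos (gauss_int x)).
  apply (Rmult_le_reg_l gauss_half_mass); [lra|]. unfold Rdiv.
  rewrite (Rmult_comm _ (/ _)), <- Rmult_assoc, Rinv_r by lra. nra.
Qed.

Lemma gauss_vanishes (eps : R) : 0 < eps -> exists M, forall x, M <= Rabs x -> gauss x < eps.
Proof.
  intros Heps. exists (2 / eps + 1). intros x Hx.
  assert (H2eps : 0 < 2 / eps) by (apply Rdiv_lt_0_compat; lra).
  assert (Hsq : 2 / eps < x ^ 2).
  { rewrite <- Rsqr_pow2, Rsqr_abs. unfold Rsqr. nra. }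
  assert (Hexp : 1 + x ^ 2 / 2 <= exp (x ^ 2 / 2)) by apply exp_ineq1_le.
  assert (Hinv : gauss x * exp (x ^ 2 / 2) = 1).
  { unfold gauss. rewrite <- exp_plus, <- exp_0. f_equal. field. }
  assert (HepsE : 1 < eps * exp (x ^ 2 / 2)).
  { apply Rlt_le_trans with (eps * (x ^ 2 / 2)); [|apply Rmult_le_compat_l; lra].
    apply (Rmult_lt_reg_r (2 / eps)); [lra|]. field_simplify; lra. }
  pose proof (gauss_pos x). nra.
Qed.

Lemma gauss_int_nonpos (x : R) : x <= 0 -> gauss_int x <= 0.
Proof. intros Hx. rewrite <- gauss_int_0. apply gauss_int_le_le, Hx. Qed.

Lemma gauss_int_nonneg (x : R) : 0 <= x -> 0 <= gauss_int x.
Proof. intros Hx. rewrite <- gauss_int_0. apply gauss_int_le_le, Hx. Qed.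

Lemma gauss_int_lim_m_infty :
  filterlim gauss_int (Rbar_locally m_infty) (locally (- gauss_half_mass)).
Proof.
  pose proof gauss_half_mass_pos.
  intros Q [eps HQ].
  destruct (gauss_vanishes (eps * gauss_half_mass / 2)) as [M HM].
  { pose proof (cond_pos eps). apply Rdiv_lt_0_compat; [nra|lra]. }
  exists (Rmin 0 (- M)). intros x Hx. apply HQ.
  assert (Hx0 : x <= 0) by (pose proof (Rmin_l 0 (- M)); lra).
  assert (HxM : M <= Rabs x) by (pose proof (Rmin_r 0 (- M)); rewrite Rabs_left1; lra).
  specialize (HM x HxM).
  pose proof (gauss_half_mass_sub_abs_gauss_int x). pose proof (gauss_int_nonpos x Hx0).
  pose proof (abs_gauss_int_le x).
  rewrite (Rabs_left1 (gauss_int x)) in * by lra.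
  assert (Hgap : 2 * gauss x / gauss_half_mass < eps).
  { apply (Rmult_lt_reg_r gauss_half_mass); [lra|]. field_simplify; lra. }
  change (Rabs (gauss_int x - - gauss_half_mass) < eps). rewrite Rabs_right; lra.
Qed.

Lemma Phi_gauss_int (x : R) : Phi x = / 2 + gauss_int x / (2 * gauss_half_mass).
Proof.
  pose proof gauss_half_mass_pos.
  assert (HD : Derive gauss_int = gauss).
  { apply functional_extensionality. intros y. apply is_derive_unique, is_derive_gauss_int. }
  assert (Hgen : is_RInt_gen gauss (Rbar_locally m_infty) (at_point x)
                   (gauss_int x - - gauss_half_mass)).
  { rewrite <- HD. apply is_RInt_gen_Derive.
    - apply Filter_prod with (fun _ => True) (fun _ => True); [apply filter_true|exact I|].
      intros a b _ _ t _. eexists. apply is_derive_gauss_int.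
    - apply Filter_prod with (fun _ => True) (fun _ => True); [apply filter_true|exact I|].
      intros a b _ _ t _. rewrite HD. apply continuous_gauss.
    - apply gauss_int_lim_m_infty.
    - intros Q HQ. apply (locally_singleton _ _ HQ). }
  assert (Hsqrt : sqrt (2 * PI) = 2 * gauss_half_mass).
  { unfold gauss_half_mass. rewrite <- (sqrt_square 2) at 2 by lra.
    rewrite <- sqrt_mult_alt by lra. f_equal. field. }
  unfold Phi. fold gauss.
  rewrite (is_RInt_gen_unique (V := R_CompleteNormedModule) _ _ Hgen), Hsqrt.
  field. lra.
Qed.

Lemma Phi_upper_tail_le (x : R) : 0 <= x -> 1 - Phi x <= gauss x / gauss_half_mass ^ 2.
Proof.
  intros Hx. pose proof gauss_half_mass_pos.
  pose proof (gauss_half_mass_sub_abs_gauss_int x) as Hgap.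
  rewrite Rabs_right in Hgap by (apply Rle_ge, gauss_int_nonneg, Hx).
  rewrite Phi_gauss_int.
  replace (1 - _) with ((gauss_half_mass - gauss_int x) / (2 * gauss_half_mass)) by (field; lra).
  replace (gauss x / _) with (2 * gauss x / gauss_half_mass / (2 * gauss_half_mass))
    by (field; lra).
  apply Rmult_le_compat_r; [apply Rlt_le, Rinv_0_lt_compat; lra|exact Hgap].
Qed.

Lemma Phi_lower_tail_le (x : R) : x <= 0 -> Phi x <= gauss x / gauss_half_mass ^ 2.
Proof.
  intros Hx. pose proof gauss_half_mass_pos.
  pose proof (gauss_half_mass_sub_abs_gauss_int x) as Hgap.
  rewrite Rabs_left1 in Hgap by (apply gauss_int_nonpos, Hx).
  rewrite Phi_gauss_int.
  replace (/ 2 + _) with ((gauss_half_mass - - gauss_int x) / (2 * gauss_half_mass))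
    by (field; lra).
  replace (gauss x / _) with (2 * gauss x / gauss_half_mass / (2 * gauss_half_mass))
    by (field; lra).
  apply Rmult_le_compat_r; [apply Rlt_le, Rinv_0_lt_compat; lra|exact Hgap].
Qed.

Lemma continuous_Phi (x : R) : continuous Phi x.
Proof.
  apply (continuous_ext (fun y => / 2 + gauss_int y / (2 * gauss_half_mass))).
  { intros y. symmetry. apply Phi_gauss_int. }
  apply (ex_derive_continuous (V := R_NormedModule)). auto_derive.
  eexists. apply is_derive_gauss_int.
Qed.

Lemma Phi_Phi_inv (c : R) : 0 < c < 1 -> Phi (Phi_inv c) = c.
Proof.
  intros Hc. unfold Phi_inv. apply epsilon_spec.
  pose proof gauss_half_mass_pos.
  destruct (gauss_vanishes (gauss_half_mass ^ 2 * Rmin c (1 - c))) as [M HM].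
  { apply Rmult_lt_0_compat; [apply pow_lt; lra|apply Rmin_glb_lt; lra]. }
  set (x := Rmax M 0).
  assert (Hx0 : 0 <= x) by apply Rmax_r.
  assert (Hsmall : gauss x / gauss_half_mass ^ 2 < Rmin c (1 - c)).
  { apply (Rmult_lt_reg_l (gauss_half_mass ^ 2)); [apply pow_lt; lra|].
    field_simplify; [|lra]. apply HM. rewrite Rabs_right by lra. apply Rmax_l. }
  assert (Heven : gauss (- x) = gauss x)
    by (unfold gauss; rewrite <- !Rsqr_pow2, <- Rsqr_neg; reflexivity).
  pose proof (Rmin_l c (1 - c)). pose proof (Rmin_r c (1 - c)).
  assert (Hlow : Phi (- x) <= c).
  { pose proof (Phi_lower_tail_le (- x) ltac:(lra)). rewrite Heven in *. lra. }
  assert (Hhigh : c <= Phi x) by (pose proof (Phi_upper_tail_le x Hx0); lra).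
  destruct (IVT_gen_consistent Phi (- x) x c continuous_Phi) as [y [_ Hy]].
  { split; [apply Rle_trans with (Phi (- x)); [apply Rmin_l|lra]
           |apply Rle_trans with (Phi x); [lra|apply Rmax_r]]. }
  exists y. exact Hy.
Qed.

Lemma one_sub_Phi_ge_half (x : R) : x <= 0 -> / 2 <= 1 - Phi x.
Proof.
  intros Hx. pose proof gauss_half_mass_pos. pose proof (gauss_int_nonpos x Hx).
  rewrite Phi_gauss_int.
  replace (1 - _) with (/ 2 + - gauss_int x / (2 * gauss_half_mass)) by (field; lra).
  cut (0 <= - gauss_int x / (2 * gauss_half_mass)); [lra|].
  apply Rdiv_le_0_compat; lra.
Qed.

Lemma gauss_shift_le_one_sub_Phi (x : R) :
  0 <= x -> gauss (x + 1) / (2 * gauss_half_mass) <= 1 - Phi x.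
Proof.
  intros Hx. pose proof gauss_half_mass_pos.
  assert (Hstep : gauss (x + 1) <= gauss_int (x + 1) - gauss_int x).
  { rewrite gauss_int_sub.
    apply Rle_trans with (RInt (fun _ => gauss (x + 1)) x (x + 1)); [rewrite RInt_const_mul; lra|].
    apply RInt_le; [lra|apply ex_RInt_const|apply ex_RInt_gauss|].
    intros t Ht. apply exp_le_compat. nra. }
  pose proof (abs_gauss_int_le (x + 1)) as Hle. pose proof (Rle_abs (gauss_int (x + 1))).
  rewrite Phi_gauss_int.
  replace (1 - _) with ((gauss_half_mass - gauss_int x) / (2 * gauss_half_mass)) by (field; lra).
  apply Rmult_le_compat_r; [apply Rlt_le, Rinv_0_lt_compat|]; lra.
Qed.

Lemma pow_le_fact_mul_exp (y : R) (k : nat) : 0 <= y -> y ^ k <= INR (fact k) * exp y.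
Proof.
  intros Hy. pose proof (INR_fact_lt_0 k).
  assert (Hterm : y ^ k / INR (fact k) <= exp y).
  { apply Rle_trans with (2 := exp_ge_taylor y k Hy).
    destruct k as [|k]; simpl; [lra|].
    cut (0 <= sum_f_R0 (fun j => y ^ j / INR (fact j)) k); [simpl; lra|].
    apply cond_pos_sum. intros j. apply Rdiv_le_0_compat; [apply pow_le, Hy|apply INR_fact_lt_0]. }
  apply (Rmult_le_compat_l (INR (fact k))) in Hterm; [|lra].
  field_simplify in Hterm; lra.
Qed.

Lemma concave_quadratic_le (a b x : R) : 0 < a -> b * x - a * x ^ 2 <= b ^ 2 / (4 * a).
Proof.
  intros Ha. apply (Rmult_le_reg_l (4 * a)); [lra|].
  field_simplify; [|lra]. pose proof (pow2_ge_0 (2 * a * x - b)). nra.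
Qed.

Lemma gauss_weight_le_fact_exp (u x : R) (k : nat) :
  exp (- x ^ 2 / (2 * u)) * Rabs x ^ k <= INR (fact k) * exp (Rabs x - x ^ 2 / (2 * u)).
Proof.
  unfold Rminus. rewrite exp_plus, <- Rmult_assoc, Rdiv_opp_l, Rmult_comm.
  apply Rmult_le_compat_r; [apply Rlt_le, exp_pos|].
  apply pow_le_fact_mul_exp, Rabs_pos.
Qed.

Section GaussianWeight.

Variables (u r : R) (k : nat).
Hypotheses (hu : 0 < u) (hr : 0 < r) (hru : r * u < 1).

Lemma gauss_weight_le_left (x : R) : x <= 0 ->
  exp (- x ^ 2 / (2 * u)) * Rabs x ^ k
  <= INR (fact k) * exp (u / 2) / Rpower (/ 2) r * Rpower (1 - Phi x) r.
Proof.
  intros Hx.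
  assert (Hexp : Rabs x - x ^ 2 / (2 * u) <= u / 2).
  { rewrite Rabs_left1 by exact Hx.
    replace (- x - x ^ 2 / (2 * u)) with ((-1) * x - / (2 * u) * x ^ 2) by (field; lra).
    replace (u / 2) with ((-1) ^ 2 / (4 * / (2 * u))) by (field; lra).
    apply concave_quadratic_le, Rinv_0_lt_compat. lra. }
  assert (Htail : Rpower (/ 2) r <= Rpower (1 - Phi x) r).
  { apply Rle_Rpower_l; [lra|]. pose proof (one_sub_Phi_ge_half x Hx). lra. }
  assert (Hhalf : 0 < Rpower (/ 2) r) by apply exp_pos.
  pose proof (INR_fact_lt_0 k).
  apply Rle_trans with (1 := gauss_weight_le_fact_exp u x k).
  apply Rle_trans with (INR (fact k) * exp (u / 2)).
  - apply Rmult_le_compat_l; [lra|]. apply exp_le_compat, Hexp.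
  - pose proof (exp_pos (u / 2)).
    set (C := INR (fact k) * exp (u / 2)).
    assert (HC : 0 < C) by (apply Rmult_lt_0_compat; lra).
    replace C with (C / Rpower (/ 2) r * Rpower (/ 2) r) at 1 by (field; lra).
    apply Rmult_le_compat_l; [apply Rlt_le, Rdiv_lt_0_compat; lra|exact Htail].
Qed.

Lemma gauss_exponent_le_right (x : R) :
  x - x ^ 2 / (2 * u) + r * (x + 1) ^ 2 / 2 <= (1 + r) ^ 2 / (2 * (/ u - r)) + r / 2.
Proof.
  assert (Hd : 0 < / u - r).
  { cut (r < / u); [lra|]. apply (Rmult_lt_reg_r u); [lra|]. rewrite Rinv_l; lra. }
  replace (x - x ^ 2 / (2 * u) + r * (x + 1) ^ 2 / 2)
    with ((1 + r) * x - (/ u - r) / 2 * x ^ 2 + r / 2) by (field; lra).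
  replace (2 * (/ u - r)) with (4 * ((/ u - r) / 2)) by (field; lra).
  apply Rplus_le_compat_r, concave_quadratic_le. lra.
Qed.

Lemma gauss_weight_le_right (x : R) : 0 <= x ->
  exp (- x ^ 2 / (2 * u)) * Rabs x ^ k
  <= INR (fact k) * exp ((1 + r) ^ 2 / (2 * (/ u - r)) + r / 2)
     * Rpower (2 * gauss_half_mass) r * Rpower (1 - Phi x) r.
Proof.
  intros Hx. pose proof gauss_half_mass_pos.
  set (E := (1 + r) ^ 2 / (2 * (/ u - r)) + r / 2).
  assert (Hexp : Rabs x - x ^ 2 / (2 * u) <= E - r * (x + 1) ^ 2 / 2).
  { rewrite Rabs_right by lra. pose proof (gauss_exponent_le_right x). unfold E. lra. }
  assert (Hshift : exp (- r * (x + 1) ^ 2 / 2) / Rpower (2 * gauss_half_mass) r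
                   = Rpower (gauss (x + 1) / (2 * gauss_half_mass)) r).
  { unfold Rpower, gauss. rewrite ln_div, ln_exp by (try apply exp_pos; lra).
    unfold Rminus. rewrite Rmult_plus_distr_l, exp_plus, Ropp_mult_distr_r_reverse, exp_Ropp.
    unfold Rdiv. f_equal. f_equal. ring. }
  assert (Htail : Rpower (gauss (x + 1) / (2 * gauss_half_mass)) r <= Rpower (1 - Phi x) r).
  { apply Rle_Rpower_l; [lra|]. split.
    - apply Rdiv_lt_0_compat; [apply gauss_pos|lra].
    - apply gauss_shift_le_one_sub_Phi, Hx. }
  pose proof (INR_fact_lt_0 k).
  assert (HR : 0 < Rpower (2 * gauss_half_mass) r) by apply exp_pos.
  set (R2 := Rpower (2 * gauss_half_mass) r) in *.
  apply Rle_trans with (1 := gauss_weight_le_fact_exp u x k).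
  apply Rle_trans with (INR (fact k) * (exp E * exp (- r * (x + 1) ^ 2 / 2))).
  - apply Rmult_le_compat_l; [lra|]. rewrite <- exp_plus. apply exp_le_compat.
    replace (- r * (x + 1) ^ 2 / 2) with (- (r * (x + 1) ^ 2 / 2)) by field. lra.
  - replace (exp (- r * (x + 1) ^ 2 / 2)) with (R2 * (exp (- r * (x + 1) ^ 2 / 2) / R2))
      by (field; lra).
    rewrite Hshift.
    replace (INR (fact k) * exp E * R2 * Rpower (1 - Phi x) r)
      with (INR (fact k) * (exp E * (R2 * Rpower (1 - Phi x) r))) by ring.
    apply Rmult_le_compat_l; [lra|]. apply Rmult_le_compat_l; [apply Rlt_le, exp_pos|].
    apply Rmult_le_compat_l; lra.
Qed.

Lemma gauss_weight_le_one_sub_Phi_pow : exists A, 0 <= A /\ forall x,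
  exp (- x ^ 2 / (2 * u)) * Rabs x ^ k <= A * Rpower (1 - Phi x) r.
Proof.
  set (A_left := INR (fact k) * exp (u / 2) / Rpower (/ 2) r).
  set (A_right := INR (fact k) * exp ((1 + r) ^ 2 / (2 * (/ u - r)) + r / 2)
                  * Rpower (2 * gauss_half_mass) r).
  exists (Rmax A_left A_right). split.
  { apply Rle_trans with A_left; [|apply Rmax_l].
    pose proof (INR_fact_lt_0 k). pose proof (exp_pos (u / 2)). pose proof (exp_pos (r * ln (/ 2))).
    apply Rlt_le, Rdiv_lt_0_compat; [nra|assumption]. }
  intros x.
  assert (Hpow : 0 <= Rpower (1 - Phi x) r) by apply Rlt_le, exp_pos.
  destruct (Rle_or_lt x 0) as [Hx|Hx].
  - apply Rle_trans with (1 := gauss_weight_le_left x Hx).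
    apply Rmult_le_compat_r; [exact Hpow|apply Rmax_l].
  - apply Rle_trans with (1 := gauss_weight_le_right x (Rlt_le _ _ Hx)).
    apply Rmult_le_compat_r; [exact Hpow|apply Rmax_r].
Qed.

End GaussianWeight.

Lemma Rpower_opp_le_telescope (a s : R) : 1 < a -> 1 < s ->
  (s - 1) * Rpower a (- s) <= Rpower (a - 1) (1 - s) - Rpower a (1 - s).
Proof.
  intros Ha Hs.
  set (t := (a - 1) / a).
  assert (Ht : 0 < t) by (apply Rdiv_lt_0_compat; lra).
  assert (Hln : ln t <= - / a).
  { pose proof (exp_ineq1_le (ln t)) as Hexp. rewrite exp_ln in Hexp by exact Ht.
    replace t with (1 - / a) in Hexp at 2 by (unfold t; field; lra). lra. }
  assert (Hpow : 1 + (s - 1) * / a <= Rpower t (1 - s)).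
  { apply Rle_trans with (2 := exp_ineq1_le ((1 - s) * ln t)). nra. }
  replace (a - 1) with (a * t) by (unfold t; field; lra).
  rewrite <- Rpower_mult_distr by lra.
  replace (- s) with ((1 - s) + - (1)) by ring.
  rewrite Rpower_plus, Rpower_Ropp, Rpower_1 by lra.
  assert (Ha' : 0 < Rpower a (1 - s)) by apply exp_pos.
  assert (Hinv : 0 < / a) by (apply Rinv_0_lt_compat; lra).
  nra.
Qed.

Lemma sum_Rpower_S_opp_le (s : R) (N : nat) : 1 < s ->
  sum_f_R0 (fun n => Rpower (INR (S n)) (- s)) N <= (s - Rpower (INR (S N)) (1 - s)) / (s - 1).
Proof.
  intros Hs. induction N as [|N IH].
  - simpl. unfold Rpower. rewrite ln_1, !Rmult_0_r, exp_0. apply Req_le. field. lra.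
  - rewrite tech5.
    assert (Ha : 1 < INR (S (S N))) by (rewrite !S_INR; pose proof (pos_INR N); lra).
    pose proof (Rpower_opp_le_telescope (INR (S (S N))) s Ha Hs) as Htel.
    replace (INR (S (S N)) - 1) with (INR (S N)) in Htel by (rewrite (S_INR (S N)); ring).
    apply (Rmult_le_reg_l (s - 1)); [lra|].
    apply (Rmult_le_compat_l (s - 1)) in IH; [|lra].
    replace ((s - 1) * ((s - Rpower (INR (S N)) (1 - s)) / (s - 1)))
      with (s - Rpower (INR (S N)) (1 - s)) in IH by (field; lra).
    replace ((s - 1) * ((s - Rpower (INR (S (S N))) (1 - s)) / (s - 1)))
      with (s - Rpower (INR (S (S N))) (1 - s)) by (field; lra).
    lra.
Qed.

Lemma ex_series_Rpower_S_opp (s : R) : 1 < s -> ex_series (fun n => Rpower (INR (S n)) (- s)).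
Proof.
  intros Hs.
  assert (Hgrow : Un_growing (sum_f_R0 (fun n => Rpower (INR (S n)) (- s)))).
  { intros n. rewrite tech5. pose proof (exp_pos (- s * ln (INR (S (S n))))). unfold Rpower. lra. }
  assert (Hub : has_ub (sum_f_R0 (fun n => Rpower (INR (S n)) (- s)))).
  { exists (s / (s - 1)). intros y [N ->].
    apply Rle_trans with (1 := sum_Rpower_S_opp_le s N Hs).
    apply Rmult_le_compat_r; [apply Rlt_le, Rinv_0_lt_compat; lra|].
    pose proof (exp_pos ((1 - s) * ln (INR (S N)))). unfold Rpower. lra. }
  destruct (growing_cv _ Hgrow Hub) as [l Hl].
  exists l. apply is_series_Reals, Hl.
Qed.

Lemma ex_series_Series_le (a b : nat -> R) :
  (forall n, 0 <= a n <= b n) -> ex_series b -> ex_series a /\ Series a <= Series b.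
Proof.
  intros Hab Hb. split.
  - apply (ex_series_le (K := R_AbsRing) (V := R_CompleteNormedModule)) with b; [|exact Hb].
    intros n. change (Rabs (a n) <= b n). rewrite Rabs_right; [apply Hab|apply Rle_ge, Hab].
  - apply Series_le; assumption.
Qed.

Lemma Series_shift_le (a : nat -> R) (n : nat) :
  (forall k, 0 <= a k) -> ex_series a -> Series (fun k => a (S n + k)%nat) <= Series a.
Proof.
  intros Ha Hex. rewrite (Series_incr_n a (S n)) by (lia || exact Hex). simpl pred.
  pose proof (cond_pos_sum a n Ha). lra.
Qed.

Section MomentTail.

Variables (K : nat) (P : param K -> nat -> R).
Hypothesis hP : is_pmf_family P.

Lemma is_series_one_sub_Ccdf (th : param K) (n : nat) :
  is_series (fun k => P th (S n + k)%nat) (1 - Ccdf P th n).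
Proof.
  apply (is_series_incr_n (K := R_AbsRing) (V := R_NormedModule)); [lia|].
  simpl pred. rewrite sum_n_Reals. unfold Ccdf, plus. simpl.
  replace (1 - sum_f_R0 (P th) n + sum_f_R0 (P th) n) with 1 by ring.
  apply (proj2 (hP th)).
Qed.

Lemma moment_term_nonneg (p : R) (th : param K) (n : nat) : 0 <= moment_term P p th n.
Proof.
  unfold moment_term, rpow. apply Rmult_le_pos; [|apply (proj1 (hP th))].
  destruct (Req_EM_T (INR n) 0); [lra|apply Rlt_le, exp_pos].
Qed.

(* Markov's inequality for [X ^ p] at the level [(n + 1) ^ p]. *)
Lemma Rpower_mul_one_sub_Ccdf_le (p M : R) (th : param K) (n : nat) : 0 <= p ->
  ex_series (moment_term P p th) -> Series (moment_term P p th) <= M ->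
  Rpower (INR (S n)) p * (1 - Ccdf P th n) <= M.
Proof.
  intros Hp Hex Hle.
  rewrite <- (is_series_unique _ _ (is_series_one_sub_Ccdf th n)), <- Series_scal_l.
  apply Rle_trans with (2 := Hle).
  apply Rle_trans with (2 := Series_shift_le _ n (moment_term_nonneg p th) Hex).
  apply Series_le; [|apply (ex_series_incr_n (K := R_AbsRing) (V := R_NormedModule)), Hex].
  intros k. pose proof (proj1 (hP th) (S n + k)%nat) as HPk.
  assert (Hpos : 0 < INR (S n)) by (apply lt_0_INR; lia).
  split; [apply Rmult_le_pos; [apply Rlt_le, exp_pos|exact HPk]|].
  unfold moment_term, rpow.
  destruct (Req_EM_T (INR (S n + k)) 0) as [E|_].
  - exfalso. pose proof (le_INR (S n) (S n + k) ltac:(lia)). lra.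
  - apply Rmult_le_compat_r; [exact HPk|]. apply Rle_Rpower_l; [exact Hp|].
    split; [exact Hpos|apply le_INR; lia].
Qed.

Lemma Rpower_one_sub_Ccdf_le (p r M : R) (th : param K) (n : nat) : 0 <= p -> 0 <= r -> 0 < M ->
  ex_series (moment_term P p th) -> Series (moment_term P p th) <= M -> Ccdf P th n < 1 ->
  Rpower (1 - Ccdf P th n) r <= Rpower M r * Rpower (INR (S n)) (- (p * r)).
Proof.
  intros Hp Hr HM Hex Hle Hc.
  assert (HSn : 0 < Rpower (INR (S n)) p) by apply exp_pos.
  assert (Hmarkov : 1 - Ccdf P th n <= M / Rpower (INR (S n)) p).
  { pose proof (Rpower_mul_one_sub_Ccdf_le p M th n Hp Hex Hle).
    apply (Rmult_le_reg_l (Rpower (INR (S n)) p)); [exact HSn|].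
    field_simplify; lra. }
  replace (Rpower M r * Rpower (INR (S n)) (- (p * r))) with (Rpower (M / Rpower (INR (S n)) p) r).
  - apply Rle_Rpower_l; lra.
  - unfold Rdiv. rewrite <- Rpower_mult_distr, <- Rpower_Ropp, Rpower_mult
      by (try apply Rinv_0_lt_compat; lra).
    f_equal. f_equal. ring.
Qed.

End MomentTail.

Lemma m_term_nonneg {K : nat} (P : param K -> nat -> R) (u : R) (k : nat) th n :
  0 <= m_term P u k th n.
Proof.
  pose proof PI_RGT_0.
  unfold m_term. destruct (Rlt_dec 0 _); [|lra]. destruct (Rlt_dec _ 1); [|lra].
  apply Rmult_le_pos; [apply Rlt_le, Rinv_0_lt_compat, sqrt_lt_R0; lra|].
  apply Rmult_le_pos; [apply Rlt_le, exp_pos|apply pow_le, Rabs_pos].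
Qed.

Lemma m_term_le_Rpower {K : nat} (P : param K -> nat -> R) (u p r M : R) (k : nat) :
  is_pmf_family P -> 0 < u -> 0 < r -> r * u < 1 -> 0 <= p ->
  exists C, forall th, ex_series (moment_term P p th) -> Series (moment_term P p th) <= M ->
    forall n, m_term P u k th n <= C * Rpower (INR (S n)) (- (p * r)).
Proof.
  intros hP hu hr hru hp.
  destruct (gauss_weight_le_one_sub_Phi_pow u r k hu hr hru) as [A [HA0 HA]].
  set (M' := Rmax M 1).
  assert (HM' : 0 < M') by (pose proof (Rmax_r M 1); unfold M'; lra).
  assert (Hsq : 0 < / sqrt (2 * PI))
    by (apply Rinv_0_lt_compat, sqrt_lt_R0; pose proof PI_RGT_0; lra).
  exists (/ sqrt (2 * PI) * A * Rpower M' r). intros th Hex Hle n.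
  assert (HC : 0 <= / sqrt (2 * PI) * A * Rpower M' r * Rpower (INR (S n)) (- (p * r))).
  { pose proof (exp_pos (r * ln M')). pose proof (exp_pos (- (p * r) * ln (INR (S n)))).
    unfold Rpower. apply Rmult_le_pos; [apply Rmult_le_pos; [apply Rmult_le_pos|]|]; lra. }
  unfold m_term.
  destruct (Rlt_dec 0 (Ccdf P th n)) as [Hc0|]; [|exact HC].
  destruct (Rlt_dec (Ccdf P th n) 1) as [Hc1|]; [|exact HC].
  assert (HQ : Phi (Qn P th n) = Ccdf P th n) by (apply Phi_Phi_inv; lra).
  specialize (HA (Qn P th n)). rewrite HQ in HA.
  assert (Htail : Rpower (1 - Ccdf P th n) r <= Rpower M' r * Rpower (INR (S n)) (- (p * r))).
  { apply (Rpower_one_sub_Ccdf_le K P hP); try lra; [exact Hex|].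
    apply Rle_trans with (1 := Hle), Rmax_l. }
  rewrite !Rmult_assoc. apply Rmult_le_compat_l; [lra|].
  apply Rle_trans with (1 := HA). apply Rmult_le_compat_l; [exact HA0|exact Htail].
Qed.

Lemma exists_exponent_between (u p : R) : 0 < u -> u < p ->
  exists r, 0 < r /\ r * u < 1 /\ 1 < p * r.
Proof.
  intros hu hup. exists ((/ p + / u) / 2).
  assert (Hinv : / p < / u) by (apply Rinv_lt_contravar; nra).
  assert (Hp : 0 < / p) by (apply Rinv_0_lt_compat; lra).
  split; [lra|split].
  - replace ((/ p + / u) / 2 * u) with ((/ p * u + 1) / 2) by (field; lra).
    cut (/ p * u < 1); [lra|]. apply (Rmult_lt_reg_l p); [lra|].
    rewrite <- Rmult_assoc, Rinv_r; lra.
  - replace (p * ((/ p + / u) / 2)) with ((1 + p * / u) / 2) by (field; lra).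
    cut (1 < p * / u); [lra|]. apply (Rmult_lt_reg_r u); [lra|].
    rewrite Rmult_assoc, Rinv_l; lra.
Qed.

Theorem mainTheorem8 (K : nat) (P : param K -> nat -> R) (hP : is_pmf_family P)
  (th_i : param K) (u p : R) (S : param K -> Prop)
  (hu : 0 < u) (hpu : u < p) (hS : is_open_param S) (hthS : S th_i)
  (hmom : exists M, forall th, S th ->
      ex_series (moment_term P p th) /\ Series (moment_term P p th) <= M) :
  forall k : nat, exists B, forall th, S th ->
      ex_series (m_term P u k th) /\ Series (m_term P u k th) <= B.
Proof.
  intros k. destruct hmom as [M HM].
  destruct (exists_exponent_between u p hu hpu) as [r [hr [hru hpr]]].
  destruct (m_term_le_Rpower P u p r M k hP hu hr hru ltac:(lra)) as [C HC].
  set (zeta n := Rpower (INR (Datatypes.S n)) (- (p * r))).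
  exists (C * Series zeta). intros th Hth. destruct (HM th Hth) as [Hex Hle].
  rewrite <- Series_scal_l.
  apply ex_series_Series_le.
  - intros n. split; [apply m_term_nonneg|apply HC; assumption].
  - apply (ex_series_scal_l (K := R_AbsRing) (V := R_NormedModule)), ex_series_Rpower_S_opp, hpr.
Qed.
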